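(* Let $R$ be a commutative ring with $1$ such that every maximal ideal of $R$ is a pure ideal. Then $R$ is absolutely flat, i.e. $R$ is reduced and zero-dimensional (every prime ideal is maximal).
   Context: An ideal $I$ of a commutative ring $R$ is called pure if the canonical ring map $R\to R/I$ is flat. A ring is absolutely flat if every module over it is flat; equivalently it is reduced and zero-dimensional. *)

From HB Require Import structures.
From mathcomp Require Import all_boot all_order all_algebra.
Set Implicit Arguments. Unset Strict Implicit. Unset Printing Implicit Defensive.
Import GRing.Theory.
Local Open Scope ring_scope.

Section CommAlg.
Variable R : comPzRingType.

Definition is_ideal (I : {pred R}) : Prop :=
  [/\ 0 \in I,
      (forall x y, x \in I -> y \in I -> x + y \in I) &
      (forall a x, x \in I -> a * x \in I)].

Definition is_prime_ideal (I : {pred R}) : Prop :=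
  [/\ is_ideal I, 1 \notin I &
      (forall a b, a * b \in I -> a \in I \/ b \in I)].

Definition is_maximal_ideal (I : {pred R}) : Prop :=
  [/\ is_ideal I, 1 \notin I &
      (forall J : {pred R}, is_ideal J -> {subset I <= J} -> 1 \notin J ->
         {subset J <= I})].

Definition bilinear_map (A M T : lmodType R) (b : A -> M -> T) : Prop :=
  (forall m, linear (fun a => b a m)) /\ (forall a, linear (b a)).

Definition is_tensor (A M T : lmodType R) (b : A -> M -> T) : Prop :=
  bilinear_map b /\
  forall (N : lmodType R) (c : A -> M -> N), bilinear_map c ->
    exists g : T -> N,
      [/\ linear g, (forall a m, g (b a m) = c a m) &
          (forall g' : T -> N, linear g' -> (forall a m, g' (b a m) = c a m) ->
             forall t, g' t = g t)].

Definition flat_module (M : lmodType R) : Prop :=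
  forall (A B : lmodType R) (f : A -> B), linear f -> injective f ->
  forall (TA TB : lmodType R) (bA : A -> M -> TA) (bB : B -> M -> TB),
    is_tensor bA -> is_tensor bB ->
  forall g : TA -> TB, linear g -> (forall a m, g (bA a m) = bB (f a) m) ->
    injective g.

(* I is pure: the canonical map R -> R/I makes R/I a flat R-module.
   R/I is given (up to isomorphism) as an R-module M with a surjective
   R-linear map p : R -> M whose kernel is exactly I. *)
Definition pure_ideal (I : {pred R}) : Prop :=
  exists (M : lmodType R) (p : R^o -> M),
    [/\ linear p, (forall m, exists x, p x = m),
        (forall x, p x = 0 <-> x \in I) & flat_module M].

Definition reduced_ring : Prop :=
  forall (x : R) (n : nat), x ^+ n = 0 -> x = 0.

Definition zero_dimensional : Prop :=
  forall I : {pred R}, is_prime_ideal I -> is_maximal_ideal I.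

End CommAlg.

From HB Require Import structures.
From mathcomp Require Import all_boot all_order all_algebra.
From mathcomp Require Import boolp classical_sets.
Import GRing.Theory.
Set Implicit Arguments. Unset Strict Implicit.
Local Open Scope ring_scope.

(* If a proper ideal J contains x together with its annihilator, then R/J is
   not flat: tensoring the inclusion Rx -> R with R/J yields, through
   Rx (x) R/J = R/J (Ann x acts trivially on R/J) and R (x) R/J = R/J, the
   multiplication by x on R/J, which is zero although R/J <> 0.  Hence no
   maximal ideal above such a J is pure.  A nonzero y with y^2 = 0 gives
   J = Ann y; a prime P properly contained in a proper ideal J gives, for
   a in J \ P, Ann a <= P <= J. *)

Lemma linear_scaler (R : comPzRingType) (M : lmodType R) (r : R) :
  linear (fun m : M => r *: m).
Proof. by move=> k u v; rewrite scalerDr !scalerA mulrC. Qed.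

Lemma scale_is_tensor (R : comPzRingType) (M : lmodType R) :
  is_tensor (fun (r : R^o) (m : M) => r *: m).
Proof.
split.
  by split=> [m k u v|r]; [rewrite scalerDl scalerA | exact: linear_scaler].
move=> N c [c_linl c_linr]; exists (c 1); split; first exact: c_linr.
  move=> r m; rewrite (scalable_linear (c_linr 1)).
  by rewrite -(scalable_linear (c_linl m)) [_ *: _]mulr1.
by move=> g' _ g'E t; rewrite -g'E scale1r.
Qed.

Section Multiples.
Variables (R : comPzRingType) (x : R).

Definition multiples : {pred R^o} := fun y => `[< exists s, y = s * x >].

Lemma multiples_submod_closed : subsemimod_closed multiples.
Proof.
split; [split|].
- by apply/asboolP; exists 0; rewrite mul0r.
- move=> _ _ /asboolP[s ->] /asboolP[t ->]; apply/asboolP; exists (s + t).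
  by rewrite mulrDl.
- move=> r _ /asboolP[s ->]; apply/asboolP; exists (r * s).
  by rewrite [_ *: _]mulrA.
Qed.

HB.instance Definition _ :=
  GRing.isSubmodClosed.Build R R^o multiples multiples_submod_closed.

Definition multiples_type : Type := {y : R^o | multiples y}.
HB.instance Definition _ :=
  [isSub for (@sval R^o multiples) : multiples_type -> R^o].
HB.instance Definition _ := [Choice of multiples_type by <:].
HB.instance Definition _ := [SubChoice_isSubLmodule of multiples_type by <:].

Definition multiples_gen : multiples_type :=
  Sub x (introT (asboolP _) (ex_intro _ 1 (esym (mul1r x)))).

Definition mcoef (a : multiples_type) : R := projT1 (cid (asboolW (valP a))).

Lemma mcoefK (a : multiples_type) : val a = mcoef a * x.
Proof. exact: projT2 (cid (asboolW (valP a))). Qed.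

Lemma mcoef_gen (a : multiples_type) : mcoef a *: multiples_gen = a.
Proof. by apply: val_inj; rewrite [RHS]mcoefK. Qed.

Lemma linear_val : linear (val : multiples_type -> R^o).
Proof. by []. Qed.

Variables (Q : lmodType R) (annQ : forall s (q : Q), s * x = 0 -> s *: q = 0).

(* [mcoef a] is determined only up to [Ann x], which acts trivially on [Q]. *)
Definition mcoef_scale (a : multiples_type) (q : Q) : Q := mcoef a *: q.

Lemma mcoef_scaleE s (a : multiples_type) q :
  val a = s * x -> mcoef_scale a q = s *: q.
Proof.
move=> aE; apply/eqP; rewrite -subr_eq0 -scalerBl; apply/eqP/annQ.
by rewrite mulrBl -mcoefK aE subrr.
Qed.

Lemma mcoef_scale_gen q : mcoef_scale multiples_gen q = q.
Proof. by rewrite (mcoef_scaleE (s := 1)) ?scale1r //= mul1r. Qed.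

Lemma mcoef_scale_is_tensor : is_tensor mcoef_scale.
Proof.
split.
  split=> [q k a b|a]; last exact: linear_scaler.
  rewrite (mcoef_scaleE (s := k * mcoef a + mcoef b)) ?scalerDl ?scalerA //.
  by rewrite linear_val mulrDl -mulrA -!mcoefK.
move=> N c [c_linl c_linr]; exists (c multiples_gen); split; first exact: c_linr.
  move=> a q; rewrite /mcoef_scale (scalable_linear (c_linr _)).
  by rewrite -(scalable_linear (c_linl q)) mcoef_gen.
by move=> g' _ g'E q; rewrite -g'E mcoef_scale_gen.
Qed.

End Multiples.

Lemma flat_annihilated_eq0 (R : comPzRingType) (Q : lmodType R) (x : R) :
  flat_module Q -> (forall q : Q, x *: q = 0) ->
  (forall s (q : Q), s * x = 0 -> s *: q = 0) -> forall q : Q, q = 0.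
Proof.
move=> flatQ xQ annQ q.
have zero_linear : linear (fun _ : Q => 0 : Q).
  by move=> k u v; rewrite scaler0 addr0.
have zero_compat (a : multiples_type x) m :
    (fun _ : Q => 0 : Q) (mcoef_scale a m) = (val a : R) *: m.
  by rewrite mcoefK -scalerA xQ scaler0.
exact: (flatQ _ _ _ (@linear_val R x) val_inj _ _ _ _
  (mcoef_scale_is_tensor annQ) (scale_is_tensor Q) _ zero_linear zero_compat q 0).
Qed.

Lemma linear_regular_mul (R : comPzRingType) (Q : lmodType R) (p : R^o -> Q) :
  linear p -> forall s t : R, p (s * t) = s *: p t.
Proof. by move=> p_lin s t; exact: (scalable_linear p_lin s t). Qed.

Definition ann (R : comPzRingType) (x : R) : {pred R} := [pred a | a * x == 0].

Lemma ann_ideal (R : comPzRingType) (x : R) : is_ideal (ann x).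
Proof.
split=> [|a b|a b]; rewrite !inE ?mul0r //.
  by rewrite mulrDl => /eqP-> /eqP->; rewrite addr0.
by rewrite -mulrA => /eqP->; rewrite mulr0.
Qed.

Lemma ann_proper (R : comPzRingType) (x : R) : x != 0 -> 1 \notin ann x.
Proof. by rewrite inE mul1r. Qed.

Lemma pure_ideal_ann_not_sub (R : comPzRingType) (M : {pred R}) (x : R) :
  pure_ideal M -> 1 \notin M -> x \in M -> ~ {subset ann x <= M}.
Proof.
move=> [Q [p [p_lin p_onto pE flatQ]]] M1 xM annM.
have pM (m t : R) : m \in M -> m *: p t = 0.
  move=> /pE pm0; rewrite -(linear_regular_mul p_lin) mulrC.
  by rewrite (linear_regular_mul p_lin) pm0 scaler0.
have MQ m (q : Q) : m \in M -> m *: q = 0.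
  by move=> mM; have [t <-] := p_onto q; exact: pM.
have xQ (q : Q) : x *: q = 0 by exact: MQ.
have annQ s (q : Q) : s * x = 0 -> s *: q = 0.
  by move=> sx0; apply/MQ/annM; rewrite inE sx0.
by move: (flat_annihilated_eq0 flatQ xQ annQ (p 1)) => /pE; apply/negP.
Qed.

Lemma reduced_of_sqr_eq0 (R : comPzRingType) :
  (forall y : R, y ^+ 2 = 0 -> y = 0) -> reduced_ring R.
Proof.
move=> sqr_eq0 x [|n]; first by move=> x0; rewrite -[x]mulr1 -(expr0 x) x0 mulr0.
elim: n => [|n IHn]; first by rewrite expr1.
move=> xn2; apply/IHn/sqr_eq0.
by rewrite expr2 -exprD addSnnS exprD xn2 mulr0.
Qed.

Section Krull.
Local Open Scope classical_set_scope.
Variable R : comPzRingType.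

Definition proper_set_ideal (Y : set R) : Prop :=
  [/\ Y 0, (forall a b, Y a -> Y b -> Y (a + b)),
      (forall a b, Y b -> Y (a * b)) & ~ Y 1].

Lemma proper_set_ideal_mem (I : {pred R}) :
  is_ideal I -> 1 \notin I -> proper_set_ideal (fun y => y \in I).
Proof. by move=> [I0 ID IM] /negP I1. Qed.

Lemma proper_set_ideal_asbool (Y : set R) : proper_set_ideal Y ->
  is_ideal (fun y => `[< Y y >]) /\ 1 \notin (fun y => `[< Y y >]).
Proof.
move=> [Y0 YD YM Y1]; rewrite /is_ideal !unfold_in; split; last exact/asboolPn.
split; first exact/asboolP.
  by move=> a b /asboolP Ya /asboolP Yb; apply/asboolP; exact: YD.
by move=> a b /asboolP Yb; apply/asboolP; exact: YM.
Qed.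

Variable J : {pred R}.
Hypotheses (J_ideal : is_ideal J) (J_proper : 1 \notin J).

Let J' : set R := [set y | y \in J].

(* Zorn's lemma is applied to the sets [X] with [X `|` J] a proper ideal:
   unlike the proper ideals above [J], this family contains [set0], the
   union of the empty chain. *)
Definition proper_ideal_over (X : set R) : Prop := proper_set_ideal (X `|` J').

Lemma proper_ideal_over0 : proper_ideal_over set0.
Proof. by rewrite /proper_ideal_over set0U; exact: proper_set_ideal_mem. Qed.

Lemma proper_ideal_over_bigcup (F : set (set R)) :
  F `<=` proper_ideal_over -> total_on F subset ->
  proper_ideal_over (\bigcup_(X in F) X).
Proof.
move=> FP Ftot; pose U := \bigcup_(X in F) X `|` J'; change (proper_set_ideal U).
pose F0 := F `|` [set set0].
have F0P : F0 `<=` proper_ideal_over.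
  by move=> X [/FP //|->]; exact: proper_ideal_over0.
have F0tot : total_on F0 subset.
  move=> X X' [FX|->] [FX'|->]; by [exact: Ftot | right | left | left].
have F0U X : F0 X -> X `|` J' `<=` U.
  by move=> [FX|->]; apply: setSU => // y Xy; exists X.
have cover a : U a -> exists2 X, F0 X & (X `|` J') a.
  by case=> [[X FX Xa]|Ja]; [exists X; left | exists set0; right].
have common a b : U a -> U b ->
    exists2 Y, proper_set_ideal Y & [/\ Y a, Y b & Y `<=` U].
  move=> /cover[X F0X Xa] /cover[X' F0X' X'b].
  have [XX'|X'X] := F0tot _ _ F0X F0X'.
    exists (X' `|` J'); first exact: F0P.
    by split; [exact: setSU Xa | | exact: F0U].
  exists (X `|` J'); first exact: F0P.
  by split; [| exact: setSU X'b | exact: F0U].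
case: J_ideal => J0 _ _; split=> [|a b Ua Ub|a b Ub|U1]; first by right.
- by have [Y [_ YD _ _] [Ya Yb YU]] := common _ _ Ua Ub; exact/YU/YD.
- by have [Y [_ _ YM _] [_ Yb YU]] := common _ _ Ub Ub; exact/YU/YM.
- by have [Y [_ _ _ Y1] [Y1' _ _]] := common _ _ U1 U1.
Qed.

Lemma exists_maximal_ideal_sup :
  exists M : {pred R}, is_maximal_ideal M /\ {subset J <= M}.
Proof.
have [A [PA Amax]] := Zorn_bigcup proper_ideal_over_bigcup.
pose M : {pred R} := fun y => `[< (A `|` J') y >].
have [M_ideal M_proper] := proper_set_ideal_asbool PA.
have JM : {subset J <= M} by move=> y Jy; apply/asboolP; right.
exists M; split=> //; split=> [||I I_ideal MI I1 y Iy];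
  [exact: M_ideal | exact: M_proper |].
apply/asboolP; apply: contrapT => nAy; apply: (Amax (fun z => z \in I)).
  split; first by move=> z Az; apply: MI; apply/asboolP; left.
  by move=> /(_ y Iy) Ay; apply: nAy; left.
rewrite /proper_ideal_over setUidl; first exact: proper_set_ideal_mem.
by move=> z /JM; exact: MI.
Qed.

End Krull.

Lemma maximal_pure_ann_not_sub (R : comPzRingType) :
  (forall M : {pred R}, is_maximal_ideal M -> pure_ideal M) ->
  forall (J : {pred R}) (x : R), is_ideal J -> 1 \notin J -> x \in J ->
  ~ {subset ann x <= J}.
Proof.
move=> pureR J x J_ideal J1 xJ annJ.
have [M [M_max JM]] := exists_maximal_ideal_sup J_ideal J1.
have [_ M1 _] := M_max.
by apply: (pure_ideal_ann_not_sub (pureR M M_max) M1 (JM _ xJ)) => a /annJ/JM.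
Qed.

Unset Implicit Arguments.
Theorem proposition2p7 (R : comPzRingType) :
  (forall I : {pred R}, is_maximal_ideal I -> pure_ideal I) ->
  reduced_ring R /\ zero_dimensional R.
Proof.
move=> pureR; split.
  apply: reduced_of_sqr_eq0 => y y2; apply/eqP/contraT => y_neq0; exfalso.
  have yy : y \in ann y by rewrite inE -expr2 y2.
  exact: (maximal_pure_ann_not_sub pureR (ann_ideal y) (ann_proper y_neq0) yy).
move=> P [P_ideal P1 P_prime]; split=> // J J_ideal PJ J1 a Ja.
apply: contraT => aP; exfalso.
apply: (maximal_pure_ann_not_sub pureR J_ideal J1 Ja) => b /eqP ba0; apply: PJ.
have ba_P : b * a \in P by rewrite ba0; case: P_ideal.
by case: (P_prime b a ba_P) => // aP'; rewrite aP' in aP.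
Qed.
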